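(* Let $\pi\in S_N$ have no fixed points, and let $k=\#\{i\in[N]:\pi(i)<i\}$. Then there is a unique pair $(v,w)\in S_N\times S_N$ such that $w$ is $k$-Grassmannian, $v\le w$ in the Bruhat order, and $\pi=wv^{-1}$.
   Context: A permutation $w\in S_N$ is $k$-Grassmannian if $w(1)<\dots<w(N-k)$ and $w(N-k+1)<\dots<w(N)$. Products are composed right to left: $(wv^{-1})(j)=w(v^{-1}(j))$. *)

(* Permutations of [N] are {perm 'I_N} (0-indexed).
   MathComp convention: (s * t) x = t (s x), so the paper's product
   w v^{-1} (j |-> w (v^{-1} j)) is written  v^-1 * w. *)
From mathcomp Require Import all_boot all_fingroup.
Set Implicit Arguments. Unset Strict Implicit. Unset Printing Implicit Defensive.

Definition perm_length (N : nat) (x : {perm 'I_N}) : nat :=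
  #|[set p : 'I_N * 'I_N | (p.1 < p.2) && (x p.2 < x p.1)]|.

(* One Bruhat step: y = x t (paper convention, y(a) = x(t(a))) for a
   transposition t, with strictly larger length. *)
Definition bruhat_step (N : nat) : rel {perm 'I_N} :=
  fun x y => [exists i : 'I_N, exists j : 'I_N,
     (i != j) && (y == (tperm i j * x)%g) && (perm_length x < perm_length y)].

Definition bruhat_le (N : nat) (v w : {perm 'I_N}) : bool :=
  connect (@bruhat_step N) v w.

(* w is k-Grassmannian: increasing on positions 1..N-k and on N-k+1..N
   (0-indexed: on [0, N-k) and on [N-k, N)). *)
Definition k_grassmannian (N k : nat) (w : {perm 'I_N}) : Prop :=
  forall i j : 'I_N, i < j -> (j < N - k) || (N - k <= i) -> w i < w j.

From mathcomp Require Import all_boot all_fingroup zify.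
Set Implicit Arguments. Unset Strict Implicit. Unset Printing Implicit Defensive.

(* Put K = N - k and D = {i | pi i < i}, and write w(a) = pi(v(a)).  If w is
   Grassmannian with its descent at K, then v <= w in Bruhat order iff
   v(a) <= w(a) for a < K and w(a) <= v(a) for a >= K: Bruhat steps can only
   lower the maximum of a prefix and raise the minimum of a suffix, and
   conversely such a v climbs to w through ascending transpositions that keep
   these bounds.  As pi has no fixed point, the bounds say exactly that w maps
   the positions >= K onto pi(D).  A Grassmannian permutation is determined by
   that image, and one exists because |pi(D)| = k. *)

Lemma connect_backward (T : finType) (e : rel T) (P : T -> Prop) :
  (forall x y, e x y -> P y -> P x) -> forall x y, connect e x y -> P y -> P x.
Proof.
move=> Pe x y /connectP[p]; elim: p x => [|z p IHp] x /=; first by move=> _ ->.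
by case/andP=> exz pz y_last Py; apply: Pe exz (IHp z pz y_last Py).
Qed.

Section BruhatSteps.
Variable N : nat.
Implicit Types x y z : {perm 'I_N}.

Lemma perm_length_tperm_lt z (i j : 'I_N) : i < j -> z j < z i ->
  perm_length (tperm i j * z)%g < perm_length z.
Proof.
move=> lt_ij z_ji; rewrite /perm_length.
set t := tperm i j; set invY := [set p | _]; set invZ := [set p | _].
(* An inversion p of [t * z] is sent to (t p.1, t p.2) when that pair is still
   increasing, and kept otherwise; in both cases it lands among the inversions
   of [z] other than (i, j). *)
pose f (p : 'I_N * 'I_N) := if t p.1 < t p.2 then (t p.1, t p.2) else p.
have f_inj : {in invY &, injective f}.
  move=> [p1 p2] [q1 q2]; rewrite !inE /f /= => /andP[lt_p _] /andP[lt_q _].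
  case: ifP => tp; case: ifP => tq.
  - by case=> /perm_inj -> /perm_inj ->.
  - by case=> e1 e2; move: tq; rewrite -e1 -e2 !tpermK lt_p.
  - by case=> e1 e2; move: tp; rewrite e1 e2 !tpermK lt_q.
  - by [].
have f_sub : f @: invY \subset invZ :\ (i, j).
  apply/subsetP => _ /imsetP[[p1 p2] + ->]; rewrite !inE /f !permM /=.
  move=> /andP[lt_p z_p]; case: ifP => tp /=.
  - rewrite tp z_p !andbT; apply/eqP => -[e1 e2].
    move: lt_p; rewrite -(tpermK i j p1) -(tpermK i j p2) -/t e1 e2 tpermL tpermR.
    by rewrite ltnNge ltnW.
  - move: z_p tp; rewrite /t.
    case: (tpermP i j p1) => [e1|e1|n1 n2]; case: (tpermP i j p2) => [e2|e2|m1 m2];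
      subst; rewrite ?eqxx /=; try lia.
    1-2: move=> z_p t_p; apply/and3P; split; try lia.
    1-2: by apply/eqP => -[] e; subst; first [exact: m2 | exact: n1].
have ijZ : (i, j) \in invZ by rewrite inE /= lt_ij z_ji.
rewrite (cardsD1 (i, j) invZ) ijZ add1n ltnS -(card_in_imset f_inj).
exact: subset_leq_card.
Qed.

Lemma bruhat_stepP x y : bruhat_step x y <->
  exists i j : 'I_N, [/\ i < j, x i < x j & y = (tperm i j * x)%g].
Proof.
split; last first.
  move=> [i [j [lt_ij x_ij ->]]]; apply/existsP; exists i; apply/existsP; exists j.
  rewrite eqxx neq_ltn lt_ij /=.
  have := @perm_length_tperm_lt (tperm i j * x)%g i j lt_ij.
  by rewrite !permM tpermL tpermR tpermKg; apply.
have x_lt (a b : 'I_N) : a < b -> perm_length x < perm_length (tperm a b * x)%g -> x a < x b.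
  move=> lt_ab len_lt; case: ltngtP => // [x_ba|/val_inj/perm_inj eab].
    by move: len_lt; rewrite ltnNge ltnW // perm_length_tperm_lt.
  by rewrite eab ltnn in lt_ab.
case/existsP=> i /existsP[j /andP[/andP[nij /eqP ->] len_lt]].
case: (ltngtP i j) => [lt_ij|lt_ji|/val_inj eij]; last by rewrite eij eqxx in nij.
  by exists i, j; split=> //; exact: x_lt.
rewrite tpermC in len_lt *.
by exists j, i; split=> //; exact: x_lt.
Qed.

Lemma bruhat_le_prefix_bound x y (a : 'I_N) (c : nat) : bruhat_le x y ->
  (forall l : 'I_N, l <= a -> y l <= c) -> forall l : 'I_N, l <= a -> x l <= c.
Proof.
move=> le_xy; refine (connect_backward
  (P := fun u : {perm 'I_N} => forall l : 'I_N, l <= a -> u l <= c) _ le_xy).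
move=> u _ /bruhat_stepP[i [j [lt_ij u_ij ->]]] y_le l l_a.
have := y_le l l_a; rewrite permM.
case: (tpermP i j l) => [->|l_j|_ _] //; first lia.
subst l.
by have := y_le i (leq_trans (ltnW lt_ij) l_a); rewrite permM tpermL.
Qed.

Lemma bruhat_le_suffix_bound x y (a : 'I_N) (c : nat) : bruhat_le x y ->
  (forall l : 'I_N, a <= l -> c <= y l) -> forall l : 'I_N, a <= l -> c <= x l.
Proof.
move=> le_xy; refine (connect_backward
  (P := fun u : {perm 'I_N} => forall l : 'I_N, a <= l -> c <= u l) _ le_xy).
move=> u _ /bruhat_stepP[i [j [lt_ij u_ij ->]]] y_ge l a_l.
have := y_ge l a_l; rewrite permM.
case: (tpermP i j l) => [l_i|->|_ _] //; last lia.
subst l.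
by have := y_ge j (leq_trans a_l (ltnW lt_ij)); rewrite permM tpermR.
Qed.
End BruhatSteps.

Definition grassmannian_at (N K : nat) (w : {perm 'I_N}) : Prop :=
  forall i j : 'I_N, i < j -> (j < K) || (K <= i) -> w i < w j.

Section BelowGrassmannian.
Variables (N K : nat) (y : {perm 'I_N}).
Hypothesis y_grass : grassmannian_at K y.
Implicit Types x : {perm 'I_N}.

Definition split_below x : Prop :=
  forall a : 'I_N, if a < K then x a <= y a else y a <= x a.

Lemma grassmannian_ltE (a b : 'I_N) : (a < K) = (b < K) -> (y a < y b) = (a < b).
Proof.
move=> same_block.
have block (i j : 'I_N) : (i < K) = (j < K) -> i < j -> (j < K) || (K <= i).
  by case: (ltnP i K); case: (ltnP j K) => //= _ _ _ /ltnW.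
case: (ltngtP a b) => [lt_ab|lt_ba|/val_inj ->]; last by rewrite ltnn.
- exact: y_grass (block _ _ same_block lt_ab).
- by rewrite ltnNge ltnW // y_grass // block.
Qed.

Lemma split_below_neq x (a : 'I_N) : split_below x -> x a != y a ->
  if a < K then x a < y a else y a < x a.
Proof.
by move=> /(_ a); case: ifP => _ le_a neq_a; rewrite ltn_neqAle le_a andbT // eq_sym.
Qed.

Lemma split_below_swap x (i j : 'I_N) : split_below x -> i < j -> x i < x j ->
  (if i < K then x j <= y i else y i <= x j) ->
  (if j < K then x i <= y j else y j <= x i) ->
  exists2 x', bruhat_step x x' & split_below x'.
Proof.
move=> below lt_ij x_ij at_i at_j; exists (tperm i j * x)%g.
  by apply/bruhat_stepP; exists i, j.
by move=> l; rewrite permM; case: tpermP => [->|->|_ _].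
Qed.

Lemma split_below_fix_left x (a b : 'I_N) : split_below x -> a < K -> b < K ->
  x a != y a -> x b = y a -> exists2 x', bruhat_step x x' & split_below x'.
Proof.
move=> below aK bK neq_a xb.
have := split_below_neq below neq_a; rewrite aK => xa_lt.
have neq_ab : a != b by apply: contraNneq neq_a => eab; rewrite -xb eab.
have ya_lt : y a < y b.
  have := below b; rewrite bK xb ltn_neqAle => ->; rewrite andbT.
  by apply: contra neq_ab => /eqP/val_inj/perm_inj ->.
have lt_ab : a < b by rewrite -grassmannian_ltE // aK bK.
apply: (split_below_swap below lt_ab); rewrite ?aK ?bK ?xb //.
exact: ltnW (ltn_trans xa_lt ya_lt).
Qed.

Lemma split_below_fix_right x (a b : 'I_N) : split_below x -> K <= a -> K <= b ->
  x b != y b -> x a = y b -> exists2 x', bruhat_step x x' & split_below x'.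
Proof.
move=> below; rewrite leqNgt => /negbTE aK; rewrite leqNgt => /negbTE bK neq_b xa.
have := split_below_neq below neq_b; rewrite bK => xb_gt.
have neq_ab : a != b by apply: contraNneq neq_b => eab; rewrite -xa eab.
have ya_lt : y a < y b.
  have := below a; rewrite aK xa ltn_neqAle => ->; rewrite andbT.
  by apply: contra neq_ab => /eqP/val_inj/perm_inj ->.
have lt_ab : a < b by rewrite -grassmannian_ltE // aK bK.
apply: (split_below_swap below lt_ab); rewrite ?aK ?bK ?xa //.
exact: ltnW (ltn_trans ya_lt xb_gt).
Qed.

Lemma split_below_step x : split_below x -> x != y ->
  exists2 x', bruhat_step x x' & split_below x'.
Proof.
move=> below neq_xy.
have y_neq (a b : 'I_N) : a != b -> y a != y b.
  by apply: contra => /eqP/perm_inj ->.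
pose left_neq (a : 'I_N) := (a < K) && (x a != y a).
case: (pickP left_neq) => [a0 left_a0 | left_agree].
- (* Maximality of [x a] is what keeps the bound at [b] in the final swap. *)
  case: (arg_maxnP (fun a => val (x a)) left_a0) => a /andP[aK neq_a] a_max.
  pose b := (x^-1)%g (y a); have xb : x b = y a by rewrite permKV.
  case: (ltnP b K) => bK; first exact: split_below_fix_left aK bK neq_a xb.
  have neq_ab : a != b by apply: contraTneq bK => <-; rewrite -ltnNge.
  have neq_b : x b != y b by rewrite xb y_neq.
  pose a' := (x^-1)%g (y b); have xa' : x a' = y b by rewrite permKV.
  case: (leqP K a') => a'K; first exact: split_below_fix_right a'K bK neq_b xa'.
  have neq_ba' : b != a' by apply: contraTneq bK => ->; rewrite -ltnNge.
  have := a_max a'; rewrite /left_neq a'K xa' y_neq // => /(_ isT) yb_le.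
  have := split_below_neq below neq_a; rewrite aK => xa_lt.
  have bK' : (b < K) = false by rewrite ltnNge bK.
  by apply: (split_below_swap below (leq_trans aK bK)); rewrite ?aK ?bK' ?xb.
- have [b neq_b] : exists b, x b != y b.
    apply/existsP; apply: contraR neq_xy => /existsPn agree.
    by apply/eqP/permP => b; apply/eqP; rewrite -[_ == _]negbK agree.
  have bK : K <= b by move: (left_agree b); rewrite /left_neq neq_b andbT; case: ltnP.
  pose a' := (x^-1)%g (y b); have xa' : x a' = y b by rewrite permKV.
  apply: (split_below_fix_right below _ bK neq_b xa').
  case: (leqP K a') => // a'K; move: (left_agree a'); rewrite /left_neq a'K xa' y_neq //.
  by apply: contraTneq bK => ->; rewrite -ltnNge.
Qed.

Lemma split_below_bruhat_le x : split_below x -> bruhat_le x y.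
Proof.
have len_le (u : {perm 'I_N}) : perm_length u <= N * N.
  by apply: leq_trans (max_card _) _; rewrite card_prod card_ord.
move=> below; have [n] := ubnP (N * N - perm_length x).
elim: n x below => // n IHn x below len_x.
have [-> | neq_xy] := eqVneq x y; first exact: connect0.
have [x' step below'] := split_below_step below neq_xy.
apply: connect_trans (connect1 step) (IHn x' below' _).
case/existsP: step => i /existsP[j /andP[_ len_lt]].
by have := len_le x'; lia.
Qed.

Lemma bruhat_le_split_below x : bruhat_le x y -> split_below x.
Proof.
move=> le_xy a; case: ltnP => aK.
- apply: (bruhat_le_prefix_bound le_xy _ (leqnn a)) => l.
  rewrite leq_eqVlt => /predU1P[/val_inj -> // | lt_la].
  by apply/ltnW/y_grass; rewrite ?aK.
- apply: (bruhat_le_suffix_bound le_xy _ (leqnn a)) => l.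
  rewrite leq_eqVlt => /predU1P[/val_inj <- // | lt_al].
  by apply/ltnW/y_grass; rewrite // aK orbT.
Qed.

Lemma bruhat_le_grassP x : bruhat_le x y <-> split_below x.
Proof. by split; [apply: bruhat_le_split_below | apply: split_below_bruhat_le]. Qed.
End BelowGrassmannian.

Lemma sorted_enum_ord_set N (A : {set 'I_N}) : sorted ltn (map val (enum A)).
Proof.
rewrite {1}/enum_mem -enumT.
apply: (subseq_sorted ltn_trans (map_subseq _ (filter_subseq _ _))).
by rewrite val_enum_ord iota_ltn_sorted.
Qed.

Lemma nth_enum_ord_set_lt N (A : {set 'I_N}) (d : 'I_N) (i j : nat) :
  i < j -> j < #|A| -> nth d (enum A) i < nth d (enum A) j.
Proof.
move=> lt_ij; rewrite cardE => lt_jA; have lt_iA := ltn_trans lt_ij lt_jA.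
rewrite -!(nth_map d 0) //; apply: (sorted_ltn_nth ltn_trans) => //;
  by rewrite ?inE ?size_map ?sorted_enum_ord_set.
Qed.

Section GrassmannianTailImage.
Variables (N K : nat) (S : {set 'I_N}).

Definition tail_image (w : {perm 'I_N}) : Prop := forall a, (w a \in S) = (K <= a).

Lemma grassmannian_at_minimal (u w : {perm 'I_N}) (a : 'I_N) :
  grassmannian_at K w -> tail_image u -> tail_image w ->
  (forall b : 'I_N, b < a -> u b = w b) -> w a <= u a.
Proof.
move=> w_grass u_S w_S agree; rewrite leqNgt; apply/negP => ua_lt.
pose b := (w^-1)%g (u a); have wb : w b = u a by rewrite permKV.
have same_block : (b < K) = (a < K) by rewrite !ltnNge -w_S -u_S wb.
have lt_ba : b < a by rewrite -(grassmannian_ltE w_grass same_block) wb.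
have /perm_inj eq_ba : u b = u a by rewrite agree.
by rewrite eq_ba ltnn in lt_ba.
Qed.

Lemma grassmannian_at_uniq (w1 w2 : {perm 'I_N}) :
  grassmannian_at K w1 -> grassmannian_at K w2 ->
  tail_image w1 -> tail_image w2 -> w1 = w2.
Proof.
move=> g1 g2 S1 S2; apply/permP => a; have [n] := ubnP a.
elim: n a => // n IHn a lt_an.
have agree (b : 'I_N) : b < a -> w1 b = w2 b.
  by move=> lt_ba; apply: IHn (leq_trans lt_ba lt_an).
apply/val_inj/eqP; rewrite eqn_leq !grassmannian_at_minimal // => b /agree //.
Qed.

Lemma grassmannian_at_exists : #|S| + K = N ->
  exists2 w : {perm 'I_N}, grassmannian_at K w & tail_image w.
Proof.
move=> card_S; have card_SC : #|~: S| = K by move: (cardsC S); rewrite card_ord; lia.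
have size_s : size (enum (~: S) ++ enum S) == N.
  by rewrite size_cat -!cardE card_SC addnC card_S.
pose t := Tuple size_s.
have t_inj : injective (tnth t).
  apply/tuple_uniqP; rewrite cat_uniq !enum_uniq andbT /=.
  by apply/hasPn => a; rewrite !mem_enum !inE => ->.
have tE (d a : 'I_N) :
    tnth t a = if a < K then nth d (enum (~: S)) a else nth d (enum S) (a - K).
  by rewrite (tnth_nth d) nth_cat -cardE card_SC.
exists (perm t_inj).
  move=> i j lt_ij; rewrite !permE !(tE i); case/orP => [jK | Ki].
    by rewrite jK (ltn_trans lt_ij jK) nth_enum_ord_set_lt ?card_SC.
  have Kj := leq_trans Ki (ltnW lt_ij).
  have [iK jK] : (i < K) = false /\ (j < K) = false by rewrite !ltnNge Ki Kj.
  rewrite iK jK nth_enum_ord_set_lt //; first lia.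
  by rewrite ltn_subLR // addnC card_S.
move=> a; rewrite permE (tE a); case: ltnP => aK.
  have : nth a (enum (~: S)) a \in ~: S by rewrite -mem_enum mem_nth // -cardE card_SC.
  by rewrite inE => /negbTE.
by rewrite -mem_enum mem_nth // -cardE ltn_subLR // addnC card_S.
Qed.
End GrassmannianTailImage.

Lemma bruhat_le_tail_image_drops N K (pi v w : {perm 'I_N}) :
  (forall i, pi i != i) -> grassmannian_at K w -> w = (v * pi)%g ->
  bruhat_le v w <-> tail_image K (pi @: [set i | pi i < i]) w.
Proof.
move=> pi_fpf w_grass ew; apply: iff_trans (bruhat_le_grassP w_grass v) _.
have point (a : 'I_N) : (if a < K then v a <= w a else w a <= v a) <->
    (w a \in pi @: [set i | pi i < i]) = (K <= a).
  rewrite ew permM (mem_imset _ _ perm_inj) inE.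
  have ne : nat_of_ord (pi (v a)) != v a := pi_fpf (v a).
  case: ltnP => _; split.
  - by rewrite ltnNge => ->.
  - by move/negbT; rewrite -leqNgt.
  - by rewrite ltn_neqAle ne.
  - by move/ltnW.
by split=> images a; apply/point.
Qed.

Theorem corollary3p1 (N : nat) (pi : {perm 'I_N}) :
  (forall i : 'I_N, pi i != i) ->
  let k := #|[set i : 'I_N | pi i < i]| in
  exists! vw : {perm 'I_N} * {perm 'I_N},
    k_grassmannian k vw.2 /\ bruhat_le vw.1 vw.2 /\ pi = (vw.1^-1 * vw.2)%g.
Proof.
move=> pi_fpf k; set S := pi @: [set i | pi i < i].
have card_S : #|S| + (N - k) = N.
  have : k <= N by rewrite -[N]card_ord max_card.
  by rewrite card_imset -/k; [lia | exact: perm_inj].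
have [w w_grass w_S] := grassmannian_at_exists card_S.
exists ((w * pi^-1)%g, w); split.
  split=> //; split; last by rewrite /= invMg invgK mulgKV.
  exact/(bruhat_le_tail_image_drops pi_fpf w_grass (esym (mulgKV pi w))).
move=> [v' w'] /= [w'_grass [le_vw pi_vw]].
have ew' : w' = (v' * pi)%g by rewrite pi_vw mulKVg.
have w'_S := proj1 (bruhat_le_tail_image_drops pi_fpf w'_grass ew') le_vw.
have eq_w : w' = w by apply: grassmannian_at_uniq w'_grass w_grass w'_S w_S.
by rewrite -eq_w ew' mulgK.
Qed.
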